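(* Let $r>0$ and let $\mu:[0,\infty)\to\mathbb R$ and $\sigma:[0,\infty)\to(0,\infty)$ be globally Lipschitz continuous, and suppose there exist constants $\kappa\ge0$ and $c>0$ such that $x\mapsto\mu(x)-(r+c)x$ is strictly increasing on $[\kappa,\infty)$. Let $\psi\in C^2[0,\infty)$ be the non-negative increasing solution of $\frac{\sigma^2(x)}{2}f''(x)+\mu(x)f'(x)=rf(x)$ with $\psi(0)=0$, $\psi'(0)=1$. Then: (I) $\psi'(x)>0$ for all $x\ge0$. (II) There exists a unique point $b_2\in[\kappa,\infty)$ such that $\psi''(x)>0$ for $x\in(\kappa,b_2)$ and $\psi''(x)<0$ for $x\in(b_2,\infty)$. (III) $\psi'(n)\to0$ as $n\to\infty$. *)

From Stdlib Require Import Reals.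
From Coquelicot Require Import Coquelicot.
Open Scope R_scope.

Definition lipschitz_nonneg (f : R -> R) : Prop :=
  exists L : R, forall x y, 0 <= x -> 0 <= y -> Rabs (f x - f y) <= L * Rabs (x - y).

(* f is in C^2[0,oo) with first derivative f1 and second derivative f2:
   two-sided derivatives on (0,oo), one-sided (right) derivatives at 0,
   and f2 continuous on [0,oo) (right-continuous at 0). *)
Definition C2_nonneg (f f1 f2 : R -> R) : Prop :=
  (forall x, 0 < x -> is_derive f x (f1 x) /\ is_derive f1 x (f2 x) /\ continuous f2 x) /\
  filterlim (fun h => (f h - f 0) / h) (at_right 0) (locally (f1 0)) /\
  filterlim (fun h => (f1 h - f1 0) / h) (at_right 0) (locally (f2 0)) /\
  filterlim f2 (at_right 0) (locally (f2 0)).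

From Stdlib Require Import Reals Lra Classical.
From Coquelicot Require Import Coquelicot.
Open Scope R_scope.

(* Put Delta := r psi / psi' - mu, so that sigma^2 psi'' / 2 = psi' Delta and psi'' has the sign
   of Delta.  Write Delta = q - m with q := r psi / psi' - (r + c) x and m := mu - (r + c) x: m is
   strictly increasing on [kappa, oo), and q' = -c - r psi psi'' / psi'^2 is at most -c wherever
   psi'' >= 0.  So Delta strictly decreases on every interval where q' <= 0.

   (I) psi' >= 0 because psi increases, and a zero of psi' at x > 0 is a minimum of psi', so
   psi''(x) = 0 and the equation gives r psi(x) = 0, which is impossible.
   (II) psi'' cannot stay positive on [kappa, oo), since Delta would then decrease with slope c.
   If psi''(z) <= 0 with z >= kappa, then psi'' < 0 at the last point a where q' >= 0, hence
   Delta(a) <= 0, and Delta decreases after a.  So b2 is the infimum of such z.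
   (III) Past b2, psi' decreases to some l.  If l > 0 then psi grows like l x, which gives
   Delta(x) <= A - c x / 2.  Since sigma grows at most linearly, psi''(x) <= -K / x for large x.
   Then psi' drops by K / 2 on each [S, 2S], but it lies within K / 2 of l beyond some point. *)

Section FilterlimArith.
Context {T : Type} {F : (T -> Prop) -> Prop} {FF : Filter F}.

Lemma filterlim_plus_fun (f g : T -> R) a b :
  filterlim f F (locally a) -> filterlim g F (locally b) ->
  filterlim (fun x => f x + g x) F (locally (a + b)).
Proof.
  intros Hf Hg. exact (filterlim_comp_2 f g Rplus Hf Hg (filterlim_Rbar_plus a b _ eq_refl)).
Qed.

Lemma filterlim_mult_fun (f g : T -> R) a b :
  filterlim f F (locally a) -> filterlim g F (locally b) ->
  filterlim (fun x => f x * g x) F (locally (a * b)).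
Proof.
  intros Hf Hg. exact (filterlim_comp_2 f g Rmult Hf Hg (filterlim_Rbar_mult a b _ eq_refl)).
Qed.

Lemma filterlim_inv_fun (f : T -> R) a :
  a <> 0 -> filterlim f F (locally a) -> filterlim (fun x => / f x) F (locally (/ a)).
Proof.
  intros Ha Hf. refine (filterlim_comp _ _ _ f Rinv _ _ _ Hf (filterlim_Rbar_inv a _)).
  intros H. apply Ha. now injection H.
Qed.

End FilterlimArith.

Lemma filterlim_right_of_continuous (f : R -> R) a :
  continuous f a -> filterlim f (at_right a) (locally (f a)).
Proof. apply filterlim_filter_le_1, filter_le_within. Qed.

Lemma filterlim_right_of_right_quotient (f : R -> R) a l :
  filterlim (fun x => (f x - f a) / (x - a)) (at_right a) (locally l) ->
  filterlim f (at_right a) (locally (f a)).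
Proof.
  intros Hq.
  assert (Hlim : filterlim (fun x => f a + (x + - a) * ((f x - f a) / (x - a)))
                   (at_right a) (locally (f a + (a + - a) * l))).
  { apply filterlim_plus_fun; [apply filterlim_const |].
    apply filterlim_mult_fun; [| exact Hq].
    apply filterlim_plus_fun; [| apply filterlim_const].
    apply (filterlim_right_of_continuous (fun x => x)), continuous_id. }
  replace (f a + (a + - a) * l) with (f a) in Hlim by ring.
  refine (filterlim_ext_loc _ f _ Hlim).
  exists (mkposreal 1 Rlt_0_1). intros x _ Hx. field. lra.
Qed.

Lemma slope_le_of_derive_le (f df : R -> R) a b k :
  a < b -> filterlim f (at_right a) (locally (f a)) ->
  (forall x, a < x <= b -> is_derive f x (df x) /\ df x <= k) ->
  f b - f a <= k * (b - a).
Proof.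
  intros Hab Ha Hd.
  assert (Hx : forall x, a < x < b -> f b - k * (b - x) <= f x).
  { intros x Hx. destruct (MVT_gen f x b df) as [t [Ht Heq]].
    - rewrite Rmin_left, Rmax_right by lra. intros y Hy. apply Hd. lra.
    - rewrite Rmin_left, Rmax_right by lra. intros y Hy.
      apply continuity_pt_filterlim, (ex_derive_continuous f). exists (df y). apply Hd. lra.
    - rewrite Rmin_left, Rmax_right in Ht by lra.
      assert (df t * (b - x) <= k * (b - x)) by (apply Rmult_le_compat_r; [lra | apply Hd; lra]).
      lra. }
  assert (Hlim : filterlim (fun x => f b - k * (b - x)) (at_right a) (locally (f b - k * (b - a)))).
  { apply (filterlim_right_of_continuous (fun x => f b - k * (b - x))).
    apply (ex_derive_continuous (fun x => f b - k * (b - x))). auto_derive. exact I. }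
  assert (Hev : at_right a (fun x => f b - k * (b - x) <= f x)).
  { change (locally a (fun x => a < x -> f b - k * (b - x) <= f x)).
    apply (filter_imp (fun x => x < b)); [intros x Hxb Hax; apply Hx; lra |].
    exact (open_lt b a Hab). }
  assert (Hle := filterlim_le (fun x => f b - k * (b - x)) f (f b - k * (b - a)) (f a) Hev Hlim Ha).
  simpl in Hle. lra.
Qed.

Lemma derive_nonneg_of_right_nondecreasing (f : R -> R) x l :
  is_derive f x l -> (forall y, x < y -> f x <= f y) -> 0 <= l.
Proof.
  intros Hd Hf. apply is_derive_Reals in Hd.
  apply Rnot_lt_le. intros Hl.
  destruct (Hd (- l) ltac:(lra)) as [[d Hd0] Hq]. simpl in Hq.
  assert (Hh := Hq (d / 2) ltac:(lra) ltac:(rewrite Rabs_pos_eq; lra)).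
  assert (0 <= (f (x + d / 2) - f x) / (d / 2)).
  { apply Rdiv_le_0_compat; [| lra]. assert (f x <= f (x + d / 2)) by (apply Hf; lra). lra. }
  apply Rabs_def2 in Hh. lra.
Qed.

Lemma last_nonneg_point (g : R -> R) z y : z <= y ->
  (forall t, z < t <= y -> continuous g t) ->
  exists a, z <= a <= y /\ (z < a -> 0 <= g a) /\ (forall t, a < t <= y -> g t < 0).
Proof.
  intros Hzy Hg.
  set (E := fun t => t = z \/ (z <= t <= y /\ 0 <= g t)).
  destruct (completeness E) as [a [Hub Hlub]].
  - exists y. intros t [-> | Ht]; lra.
  - exists z. now left.
  assert (Hza : z <= a) by (apply Hub; now left).
  assert (Hay : a <= y) by (apply Hlub; intros t [-> | Ht]; lra).
  exists a. split; [lra | split].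
  - intros Hza'. apply Rnot_lt_le. intros Hneg.
    destruct (Hg a ltac:(lra) _ (open_lt 0 (g a) Hneg)) as [d Hd].
    assert (Hmin := Rmin_glb_lt d (a - z) 0 (cond_pos d) ltac:(lra)).
    assert (a <= a - Rmin d (a - z) / 2); [| lra].
    apply Hlub. intros t [-> | [Ht Hgt]].
    + pose proof (Rmin_r d (a - z)). lra.
    + apply Rnot_lt_le. intros Hlt. assert (t <= a) by (apply Hub; right; split; assumption).
      pose proof (Rmin_l d (a - z)).
      assert (g t < 0); [| lra]. apply Hd.
      change (Rabs (t - a) < d). rewrite Rabs_left1; lra.
  - intros t Ht. apply Rnot_le_lt. intros Hnn.
    assert (t <= a) by (apply Hub; right; split; [lra | exact Hnn]). lra.
Qed.

Lemma ex_glb (P : R -> Prop) m : (exists x, P x) -> (forall x, P x -> m <= x) ->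
  exists b, m <= b /\ (forall x, P x -> b <= x) /\ (forall x, b < x -> exists y, P y /\ y < x).
Proof.
  intros [x0 Hx0] Hm.
  destruct (completeness (fun y => P (- y))) as [s [Hub Hlub]].
  - exists (- m). intros y Hy. specialize (Hm _ Hy). lra.
  - exists (- x0). now rewrite Ropp_involutive.
  exists (- s). split; [| split].
  - assert (s <= - m); [| lra]. apply Hlub. intros y Hy. specialize (Hm _ Hy). lra.
  - intros x Hx. assert (- x <= s); [| lra]. apply Hub. now rewrite Ropp_involutive.
  - intros x Hx. apply NNPP. intros Hno.
    assert (s <= - x); [| lra]. apply Hlub. intros y Hy.
    apply Rnot_lt_le. intros Hlt. apply Hno. exists (- y). split; [exact Hy | lra].
Qed.

Lemma lipschitz_nonneg_linear_growth (f : R -> R) : lipschitz_nonneg f ->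
  exists L, 0 < L /\ forall x y, 0 <= x <= y -> f y <= f x + L * (y - x).
Proof.
  intros [L HL]. exists (Rabs L + 1). split; [pose proof (Rabs_pos L); lra |].
  intros x y Hxy. specialize (HL y x ltac:(lra) ltac:(lra)).
  rewrite (Rabs_pos_eq (y - x)) in HL by lra.
  pose proof (Rle_abs (f y - f x)).
  assert (L * (y - x) <= (Rabs L + 1) * (y - x)); [| lra].
  apply Rmult_le_compat_r; [lra | pose proof (Rle_abs L); lra].
Qed.

Lemma is_lim_seq_INR_of_nonincreasing (f : R -> R) x0 :
  (forall x y, x0 <= x <= y -> f y <= f x) -> (forall x, x0 <= x -> 0 <= f x) ->
  (forall eps, 0 < eps -> exists x, x0 <= x /\ f x < eps) ->
  is_lim_seq (fun n => f (INR n)) 0.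
Proof.
  intros Hdec Hpos Hsmall. apply is_lim_seq_spec. intros eps.
  destruct (Hsmall eps (cond_pos eps)) as [x [Hx Hfx]].
  destruct (INR_unbounded x) as [N HN]. exists N. intros n Hn. apply le_INR in Hn.
  rewrite Rminus_0_r, Rabs_pos_eq by (apply Hpos; lra).
  assert (f (INR n) <= f x) by (apply Hdec; lra). lra.
Qed.

Definition sign_change_at (g : R -> R) (k b : R) : Prop :=
  k <= b /\ (forall x, k < x < b -> 0 < g x) /\ (forall x, b < x -> g x < 0).

Lemma sign_change_at_unique g k b b' :
  sign_change_at g k b -> sign_change_at g k b' -> b = b'.
Proof.
  intros [Hk [Hpos Hneg]] [Hk' [Hpos' Hneg']].
  destruct (Rtotal_order b b') as [H | [H | H]]; [exfalso | exact H | exfalso].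
  - assert (0 < g ((b + b') / 2)) by (apply Hpos'; lra).
    assert (g ((b + b') / 2) < 0) by (apply Hneg; lra). lra.
  - assert (0 < g ((b + b') / 2)) by (apply Hpos; lra).
    assert (g ((b + b') / 2) < 0) by (apply Hneg'; lra). lra.
Qed.

Section Solution.

Variables (r kappa c : R) (mu sigma psi psi1 psi2 : R -> R).
Hypotheses (hr : 0 < r) (hc : 0 < c) (hkappa : 0 <= kappa)
  (hsigpos : forall x, 0 <= x -> 0 < sigma x)
  (hincr : forall x y, kappa <= x -> x < y -> mu x - (r + c) * x < mu y - (r + c) * y)
  (hC2 : C2_nonneg psi psi1 psi2)
  (hode : forall x, 0 <= x -> (sigma x) ^ 2 / 2 * psi2 x + mu x * psi1 x = r * psi x)
  (hnonneg : forall x, 0 <= x -> 0 <= psi x)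
  (hmono : forall x y, 0 <= x -> x <= y -> psi x <= psi y)
  (h0 : psi 0 = 0) (h1 : psi1 0 = 1).

Lemma psi_derive x : 0 < x -> is_derive psi x (psi1 x).
Proof. intros Hx. apply (proj1 hC2 x Hx). Qed.

Lemma psi1_derive x : 0 < x -> is_derive psi1 x (psi2 x).
Proof. intros Hx. apply (proj1 hC2 x Hx). Qed.

Lemma psi2_continuous x : 0 < x -> continuous psi2 x.
Proof. intros Hx. apply (proj1 hC2 x Hx). Qed.

Lemma psi_pos x : 0 < x -> 0 < psi x.
Proof.
  intros Hx. destruct hC2 as [_ [Hq _]]. rewrite h1 in Hq.
  assert (Hev : at_right 0 (fun h => 0 < h /\ h < x /\ 0 < (psi h - psi 0) / h)).
  { apply filter_and.
    { change (locally 0 (fun h => 0 < h -> 0 < h)). apply filter_forall. now intros h. }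
    apply filter_and; [exact (filter_le_within _ _ (open_lt x 0 Hx)) |].
    exact (Hq _ (open_gt 0 1 Rlt_0_1)). }
  destruct (filter_ex _ Hev) as [h [Hh [Hhx Hquot]]].
  rewrite h0, Rminus_0_r in Hquot.
  apply Rlt_le_trans with (psi h); [| apply hmono; lra].
  replace (psi h) with (psi h / h * h) by (field; lra).
  apply Rmult_lt_0_compat; lra.
Qed.

Lemma psi1_pos x : 0 <= x -> 0 < psi1 x.
Proof.
  intros Hx. destruct (Req_dec x 0) as [-> | Hx0]; [lra |].
  assert (Hnonneg : forall y, 0 < y -> 0 <= psi1 y).
  { intros y Hy. apply (derive_nonneg_of_right_nondecreasing psi y); [now apply psi_derive |].
    intros z Hz. apply hmono; lra. }
  destruct (Rle_lt_or_eq_dec 0 (psi1 x) (Hnonneg x ltac:(lra))) as [Hlt | Heq];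
    [exact Hlt | exfalso].
  assert (Hpsi2 : psi2 x = 0).
  { set (pr := exist _ (psi2 x) (proj1 (is_derive_Reals _ _ _) (psi1_derive x ltac:(lra)))
                : derivable_pt psi1 x).
    apply (deriv_minimum psi1 0 (2 * x) x pr); [lra | lra |].
    intros y Hy _. rewrite <- Heq. now apply Hnonneg. }
  specialize (hode x Hx). rewrite Hpsi2, <- Heq in hode.
  assert (0 < r * psi x) by (apply Rmult_lt_0_compat; [exact hr | apply psi_pos; lra]).
  lra.
Qed.

Lemma psi_right_continuous a : 0 <= a -> filterlim psi (at_right a) (locally (psi a)).
Proof.
  intros Ha. destruct (Req_dec a 0) as [-> | Ha0].
  - apply (filterlim_right_of_right_quotient psi 0 (psi1 0)).
    eapply filterlim_ext; [| exact (proj1 (proj2 hC2))]. intros h. simpl. now rewrite Rminus_0_r.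
  - apply filterlim_right_of_continuous, (ex_derive_continuous psi).
    exists (psi1 a). apply psi_derive. lra.
Qed.

Lemma psi1_right_continuous a : 0 <= a -> filterlim psi1 (at_right a) (locally (psi1 a)).
Proof.
  intros Ha. destruct (Req_dec a 0) as [-> | Ha0].
  - apply (filterlim_right_of_right_quotient psi1 0 (psi2 0)).
    eapply filterlim_ext; [| exact (proj1 (proj2 (proj2 hC2)))].
    intros h. simpl. now rewrite Rminus_0_r.
  - apply filterlim_right_of_continuous, (ex_derive_continuous psi1).
    exists (psi2 a). apply psi1_derive. lra.
Qed.

Definition q x := r * psi x / psi1 x - (r + c) * x.
Definition dq x := - c - r * psi x * psi2 x / psi1 x ^ 2.
Definition Delta x := r * psi x / psi1 x - mu x.

Lemma q_derive x : 0 < x -> is_derive q x (dq x).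
Proof.
  intros Hx. assert (Hp := psi1_pos x ltac:(lra)).
  replace (dq x) with ((r * psi1 x * psi1 x - r * psi x * psi2 x) / psi1 x ^ 2 - (r + c) * 1)
    by (unfold dq; field; lra).
  apply (is_derive_minus (fun y => r * psi y / psi1 y) (fun y => (r + c) * y)).
  - apply (is_derive_div (fun y => r * psi y) psi1);
      [apply is_derive_scal, psi_derive | apply psi1_derive |]; lra.
  - apply is_derive_scal. exact (is_derive_id x).
Qed.

Lemma q_right_continuous a : 0 <= a -> filterlim q (at_right a) (locally (q a)).
Proof.
  intros Ha. unfold q.
  apply filterlim_plus_fun.
  - apply filterlim_mult_fun.
    { apply filterlim_mult_fun; [apply filterlim_const | now apply psi_right_continuous]. }
    apply filterlim_inv_fun; [apply Rgt_not_eq, psi1_pos, Ha | now apply psi1_right_continuous].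
  - apply (filterlim_right_of_continuous (fun x => - ((r + c) * x))).
    apply (ex_derive_continuous (fun x => - ((r + c) * x))). auto_derive. exact I.
Qed.

Lemma psi2_Delta x : 0 <= x -> sigma x ^ 2 / 2 * psi2 x = psi1 x * Delta x.
Proof.
  intros Hx. assert (Hp := psi1_pos x Hx). assert (H := hode x Hx).
  unfold Delta. replace (psi1 x * (r * psi x / psi1 x - mu x)) with (r * psi x - mu x * psi1 x)
    by (field; lra).
  lra.
Qed.

Lemma psi2_neg_iff x : 0 <= x -> psi2 x < 0 <-> Delta x < 0.
Proof.
  intros Hx. assert (He := psi2_Delta x Hx). assert (Hp := psi1_pos x Hx).
  assert (Hs : 0 < sigma x ^ 2 / 2) by (assert (Hs := hsigpos x Hx); nra).
  split; intros H; nra.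
Qed.

Lemma psi2_pos_iff x : 0 <= x -> 0 < psi2 x <-> 0 < Delta x.
Proof.
  intros Hx. assert (He := psi2_Delta x Hx). assert (Hp := psi1_pos x Hx).
  assert (Hs : 0 < sigma x ^ 2 / 2) by (assert (Hs := hsigpos x Hx); nra).
  split; intros H; nra.
Qed.

Lemma dq_le_of_psi2_nonneg x : 0 <= x -> 0 <= psi2 x -> dq x <= - c.
Proof.
  intros Hx H2. unfold dq.
  assert (0 <= r * psi x * psi2 x / psi1 x ^ 2); [| lra].
  apply Rdiv_le_0_compat; [| apply pow_lt, psi1_pos, Hx].
  apply Rmult_le_pos; [apply Rmult_le_pos; [lra | apply hnonneg, Hx] | exact H2].
Qed.

Lemma dq_continuous x : 0 < x -> continuous dq x.
Proof.
  intros Hx.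
  apply (continuous_ext (fun y => - c + - r * psi y * psi2 y * / psi1 y ^ 2));
    [intros y; change (- c + - r * psi y * psi2 y * / psi1 y ^ 2 = dq y); unfold dq, Rdiv; ring |].
  apply filterlim_plus_fun; [apply filterlim_const |].
  apply filterlim_mult_fun; [apply filterlim_mult_fun |].
  - apply (ex_derive_continuous (fun y => - r * psi y)).
    auto_derive. exists (psi1 x). now apply psi_derive.
  - now apply psi2_continuous.
  - apply (filterlim_inv_fun (fun y => psi1 y ^ 2)); [apply Rgt_not_eq, pow_lt, psi1_pos; lra |].
    apply (ex_derive_continuous (fun y => psi1 y ^ 2)).
    auto_derive. exists (psi2 x). now apply psi1_derive.
Qed.

Lemma Delta_drop a b k : kappa <= a < b -> (forall t, a < t <= b -> dq t <= - k) ->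
  Delta b < Delta a - k * (b - a).
Proof.
  intros Hab Hdq.
  assert (Hq : q b - q a <= - k * (b - a)).
  { apply (slope_le_of_derive_le q dq); [lra | apply q_right_continuous; lra |].
    intros t Ht. split; [apply q_derive; lra | now apply Hdq]. }
  assert (Hm := hincr a b ltac:(lra) ltac:(lra)).
  unfold Delta, q in *. lra.
Qed.

Lemma psi2_neg_after z : kappa <= z -> psi2 z <= 0 -> forall y, z < y -> psi2 y < 0.
Proof.
  intros Hz Hz2 y Hy.
  destruct (last_nonneg_point dq z y) as [a [Ha [Hdqa Hdq]]];
    [lra | intros t Ht; apply dq_continuous; lra |].
  assert (Ha2 : z < a -> psi2 a < 0).
  { intros Hza. apply Rnot_le_lt. intros H2.
    assert (dq a <= - c) by (apply dq_le_of_psi2_nonneg; lra).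
    specialize (Hdqa Hza). lra. }
  destruct (Req_dec a y) as [<- | Hay]; [apply Ha2; lra |].
  assert (HDa : Delta a <= 0).
  { apply Rnot_lt_le. intros HD. apply psi2_pos_iff in HD; [| lra].
    destruct (Req_dec z a) as [<- | Hza]; [lra | specialize (Ha2 ltac:(lra)); lra]. }
  assert (HDy : Delta y < Delta a - 0 * (y - a)).
  { apply Delta_drop; [lra |]. intros t Ht. specialize (Hdq t Ht). lra. }
  apply psi2_neg_iff; lra.
Qed.

Lemma ex_psi2_nonpos : exists x, kappa <= x /\ psi2 x <= 0.
Proof.
  apply NNPP. intros Hno.
  assert (Hpos : forall x, kappa <= x -> 0 < psi2 x).
  { intros x Hx. apply Rnot_le_lt. intros H. apply Hno. exists x. split; assumption. }
  set (b := kappa + Rmax 0 (Delta kappa) / c + 1).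
  assert (Hb : kappa < b).
  { assert (0 <= Rmax 0 (Delta kappa) / c) by (apply Rdiv_le_0_compat; [apply Rmax_l | lra]).
    unfold b. lra. }
  assert (Hdrop : Delta b < Delta kappa - c * (b - kappa)).
  { apply Delta_drop; [lra |]. intros t Ht.
    apply dq_le_of_psi2_nonneg; [lra | left; apply Hpos; lra]. }
  assert (c * (b - kappa) = Rmax 0 (Delta kappa) + c) by (unfold b; field; lra).
  assert (Delta kappa <= Rmax 0 (Delta kappa)) by apply Rmax_r.
  assert (0 < Delta b) by (apply psi2_pos_iff; [lra | apply Hpos; lra]).
  lra.
Qed.

Lemma psi2_sign_change : exists b, sign_change_at psi2 kappa b.
Proof.
  destruct (ex_glb (fun x => kappa <= x /\ psi2 x <= 0) kappa) as [b [Hkb [Hlow Hinf]]].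
  - exact ex_psi2_nonpos.
  - intros x Hx. apply Hx.
  exists b. split; [exact Hkb | split].
  - intros x Hx. apply Rnot_le_lt. intros H.
    assert (b <= x) by (apply Hlow; split; lra). lra.
  - intros x Hx. destruct (Hinf x Hx) as [y [[Hky Hy] Hyx]].
    exact (psi2_neg_after y Hky Hy x Hyx).
Qed.

Lemma Delta_upper_bound x0 x l M : kappa <= x0 <= x -> 0 < l <= psi1 x ->
  psi x <= psi x0 + M * (x - x0) ->
  Delta x <= r * psi x0 / l - mu x0 + (r * M / l - (r + c)) * (x - x0).
Proof.
  intros Hx Hl Hpsi.
  assert (Hmu : mu x0 + (r + c) * (x - x0) <= mu x).
  { destruct (Req_dec x0 x) as [<- | Hne]; [lra |].
    assert (H := hincr x0 x ltac:(lra) ltac:(lra)). lra. }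
  assert (Hratio : r * psi x / psi1 x <= r * psi x / l).
  { apply Rmult_le_compat_l; [apply Rmult_le_pos; [lra | apply hnonneg; lra] |].
    apply Rinv_le_contravar; lra. }
  assert (Hpsil : r * psi x / l <= r * (psi x0 + M * (x - x0)) / l).
  { apply Rmult_le_compat_r; [apply Rlt_le, Rinv_0_lt_compat; lra |].
    apply Rmult_le_compat_l; lra. }
  assert (r * (psi x0 + M * (x - x0)) / l = r * psi x0 / l + r * M / l * (x - x0)) by (field; lra).
  unfold Delta. lra.
Qed.

Lemma psi2_bound_of_Delta_bound x l D s : 0 <= x -> 0 < l <= psi1 x -> 0 <= D ->
  Delta x <= - D -> sigma x <= s -> psi2 x * s ^ 2 <= - 2 * l * D.
Proof.
  intros Hx Hl HD HDelta Hs.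
  assert (He := psi2_Delta x Hx). assert (Hsig := hsigpos x Hx).
  assert (Hp2 : psi2 x <= 0).
  { apply Rnot_lt_le. intros H. apply psi2_pos_iff in H; lra. }
  assert (0 <= (psi1 x - l) * - Delta x) by (apply Rmult_le_pos; lra).
  assert (l * Delta x <= l * - D) by (apply Rmult_le_compat_l; lra).
  assert (sigma x ^ 2 <= s ^ 2) by (apply pow_incr; lra).
  assert (0 <= (s ^ 2 - sigma x ^ 2) * - psi2 x) by (apply Rmult_le_pos; lra).
  lra.
Qed.

Section Concave.

Variable b : R.
Hypotheses (hb : kappa <= b) (hneg : forall x, b < x -> psi2 x < 0).

Lemma psi1_nonincreasing x y : b <= x <= y -> psi1 y <= psi1 x.
Proof.
  intros Hxy. destruct (Req_dec x y) as [<- | Hne]; [lra |].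
  assert (psi1 y - psi1 x <= 0 * (y - x)); [| lra].
  apply (slope_le_of_derive_le psi1 psi2); [lra | apply psi1_right_continuous; lra |].
  intros t Ht. split; [apply psi1_derive; lra | left; apply hneg; lra].
Qed.

Lemma psi_le_tangent x0 x : b <= x0 <= x -> psi x <= psi x0 + psi1 x0 * (x - x0).
Proof.
  intros Hx. destruct (Req_dec x0 x) as [<- | Hne]; [lra |].
  assert (psi x - psi x0 <= psi1 x0 * (x - x0)); [| lra].
  apply (slope_le_of_derive_le psi psi1); [lra | apply psi_right_continuous; lra |].
  intros t Ht. split; [apply psi_derive; lra | apply psi1_nonincreasing; lra].
Qed.

Lemma Delta_linear_decay x0 l : b <= x0 -> 0 < l -> (forall x, b <= x -> l <= psi1 x) ->
  psi1 x0 <= l + c * l / (2 * r) ->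
  forall d, 0 <= d -> Delta (x0 + d) <= r * psi x0 / l - mu x0 - c / 2 * d.
Proof.
  intros Hx0 Hl Hlow Hpx0 d Hd.
  assert (H := Delta_upper_bound x0 (x0 + d) l (psi1 x0) ltac:(lra)
                 (conj Hl (Hlow (x0 + d) ltac:(lra))) (psi_le_tangent x0 (x0 + d) ltac:(lra))).
  replace (x0 + d - x0) with d in H by ring.
  assert (r * psi1 x0 / l <= r + c / 2).
  { replace (r + c / 2) with (r * (l + c * l / (2 * r)) / l) by (field; lra).
    apply Rmult_le_compat_r; [apply Rlt_le, Rinv_0_lt_compat; lra | apply Rmult_le_compat_l; lra]. }
  assert ((r * psi1 x0 / l - (r + c)) * d <= - c / 2 * d) by (apply Rmult_le_compat_r; lra).
  lra.
Qed.

Lemma psi2_decay x0 l L A : b <= x0 -> 0 < l -> (forall x, b <= x -> l <= psi1 x) -> 0 < L ->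
  (forall x y, 0 <= x <= y -> sigma y <= sigma x + L * (y - x)) ->
  (forall d, 0 <= d -> Delta (x0 + d) <= A - c / 2 * d) ->
  forall d, 4 * Rabs A / c + sigma x0 / L + 1 <= d -> psi2 (x0 + d) * d <= - (c * l / (8 * L ^ 2)).
Proof.
  intros Hx0 Hl Hlow HL Hsig HDelta d Hd.
  assert (HA : 0 <= 4 * Rabs A / c /\ A <= c / 4 * (4 * Rabs A / c)).
  { split; [apply Rdiv_le_0_compat; [pose proof (Rabs_pos A) |]; lra |].
    pose proof (Rle_abs A). field_simplify; lra. }
  assert (Hsig0 : 0 < sigma x0 / L /\ sigma x0 = L * (sigma x0 / L)).
  { split; [apply Rdiv_lt_0_compat; [apply hsigpos |]; lra | field; lra]. }
  assert (HDd : Delta (x0 + d) <= - (c / 4 * d)).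
  { assert (H := HDelta d ltac:(lra)).
    assert (c / 4 * (4 * Rabs A / c) <= c / 4 * d) by (apply Rmult_le_compat_l; lra). lra. }
  assert (Hsd : sigma (x0 + d) <= 2 * L * d).
  { assert (H := Hsig x0 (x0 + d) ltac:(lra)).
    assert (L * (sigma x0 / L) <= L * d) by (apply Rmult_le_compat_l; lra). lra. }
  assert (Hx : 0 <= x0 + d) by lra.
  assert (Hp1 : 0 < l <= psi1 (x0 + d)) by (split; [lra | apply Hlow; lra]).
  assert (HD : 0 <= c / 4 * d) by (apply Rmult_le_pos; lra).
  assert (H := psi2_bound_of_Delta_bound (x0 + d) l (c / 4 * d) (2 * L * d) Hx Hp1 HD HDd Hsd).
  assert (HL2 : 0 < L ^ 2) by (apply pow_lt, HL).
  assert (8 * L ^ 2 * (c * l / (8 * L ^ 2)) = c * l) by (field; lra).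
  assert (0 < 4 * L ^ 2 * d) by nra.
  nra.
Qed.

Hypothesis hsig : lipschitz_nonneg sigma.

Lemma psi1_inf_not_pos l : 0 < l -> (forall x, b <= x -> l <= psi1 x) ->
  (forall eta, 0 < eta -> exists x, b <= x /\ psi1 x < l + eta) -> False.
Proof.
  intros Hl Hlow Hinf.
  destruct (lipschitz_nonneg_linear_growth sigma hsig) as [L [HL Hsig]].
  set (K := c * l / (8 * L ^ 2)).
  assert (HK : 0 < K).
  { apply Rdiv_lt_0_compat; [nra |]. assert (0 < L ^ 2) by (apply pow_lt, HL). lra. }
  destruct (Hinf (Rmin (c * l / (2 * r)) (K / 2))) as [x0 [Hx0 Hpx0]].
  { apply Rmin_glb_lt; [apply Rdiv_lt_0_compat; nra | lra]. }
  assert (Heta1 := Rmin_l (c * l / (2 * r)) (K / 2)).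
  assert (Heta2 := Rmin_r (c * l / (2 * r)) (K / 2)).
  assert (HDelta := Delta_linear_decay x0 l Hx0 Hl Hlow ltac:(lra)).
  set (S := 4 * Rabs (r * psi x0 / l - mu x0) / c + sigma x0 / L + 1).
  assert (HS : 0 < S).
  { assert (0 <= Rabs (r * psi x0 / l - mu x0) / c)
      by (apply Rdiv_le_0_compat; [apply Rabs_pos | lra]).
    assert (0 < sigma x0 / L) by (apply Rdiv_lt_0_compat; [apply hsigpos |]; lra).
    unfold S. lra. }
  assert (Hdecay : forall d, S <= d -> psi2 (x0 + d) * d <= - K)
    by exact (psi2_decay x0 l L _ Hx0 Hl Hlow HL Hsig HDelta).
  assert (Hdrop : psi1 (x0 + 2 * S) - psi1 (x0 + S) <= - K / (2 * S) * (x0 + 2 * S - (x0 + S))).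
  { apply (slope_le_of_derive_le psi1 psi2); [lra | apply psi1_right_continuous; lra |].
    intros t Ht. split; [apply psi1_derive; lra |].
    assert (H := Hdecay (t - x0) ltac:(lra)). replace (x0 + (t - x0)) with t in H by ring.
    assert (Hp2 : psi2 t < 0) by (apply hneg; lra).
    apply Rmult_le_reg_r with (2 * S); [lra |].
    replace (- K / (2 * S) * (2 * S)) with (- K) by (field; lra). nra. }
  replace (- K / (2 * S) * (x0 + 2 * S - (x0 + S))) with (- K / 2) in Hdrop by (field; lra).
  assert (l <= psi1 (x0 + 2 * S)) by (apply Hlow; lra).
  assert (psi1 (x0 + S) <= psi1 x0) by (apply psi1_nonincreasing; lra).
  lra.
Qed.

Lemma psi1_arbitrarily_small eps : 0 < eps -> exists x, b <= x /\ psi1 x < eps.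
Proof.
  intros Heps.
  destruct (ex_glb (fun v => exists x, b <= x /\ v = psi1 x) 0) as [l [Hl0 [Hlow Hinf]]].
  - exists (psi1 b), b. split; [lra | reflexivity].
  - intros v [x [Hx ->]]. left. apply psi1_pos. lra.
  assert (Hl : l = 0).
  { destruct (Rle_lt_or_eq_dec 0 l Hl0) as [Hpos | <-]; [exfalso | reflexivity].
    apply (psi1_inf_not_pos l Hpos).
    - intros x Hx. apply Hlow. exists x. split; [exact Hx | reflexivity].
    - intros eta Heta. destruct (Hinf (l + eta) ltac:(lra)) as [v [[x [Hx ->]] Hv]].
      exists x. split; assumption. }
  subst l. destruct (Hinf eps Heps) as [v [[x [Hx ->]] Hv]]. exists x. split; assumption.
Qed.

Lemma psi1_tends_to_zero : is_lim_seq (fun n => psi1 (INR n)) 0.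
Proof.
  apply (is_lim_seq_INR_of_nonincreasing psi1 b).
  - exact psi1_nonincreasing.
  - intros x Hx. left. apply psi1_pos. lra.
  - exact psi1_arbitrarily_small.
Qed.

End Concave.

End Solution.

Theorem lemmaA2 (r kappa c : R) (mu sigma psi psi1 psi2 : R -> R)
  (hr : 0 < r)
  (hmu : lipschitz_nonneg mu)
  (hsig : lipschitz_nonneg sigma)
  (hsigpos : forall x, 0 <= x -> 0 < sigma x)
  (hkappa : 0 <= kappa) (hc : 0 < c)
  (hincr : forall x y, kappa <= x -> x < y ->
             mu x - (r + c) * x < mu y - (r + c) * y)
  (hC2 : C2_nonneg psi psi1 psi2)
  (hode : forall x, 0 <= x ->
            (sigma x) ^ 2 / 2 * psi2 x + mu x * psi1 x = r * psi x)
  (hnonneg : forall x, 0 <= x -> 0 <= psi x)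
  (hmono : forall x y, 0 <= x -> x <= y -> psi x <= psi y)
  (h0 : psi 0 = 0) (h1 : psi1 0 = 1) :
  (forall x, 0 <= x -> 0 < psi1 x) /\
  (exists! b2 : R, kappa <= b2 /\
      (forall x, kappa < x < b2 -> 0 < psi2 x) /\
      (forall x, b2 < x -> psi2 x < 0)) /\
  is_lim_seq (fun n : nat => psi1 (INR n)) 0.
Proof.
  destruct (psi2_sign_change r kappa c mu sigma psi psi1 psi2
              hr hc hkappa hsigpos hincr hC2 hode hnonneg hmono h0 h1) as [b2 Hb2].
  split; [| split].
  - exact (psi1_pos r mu sigma psi psi1 psi2 hr hC2 hode hmono h0 h1).
  - exists b2. split; [exact Hb2 |].
    intros b' Hb'. exact (sign_change_at_unique _ _ _ _ Hb2 Hb').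
  - destruct Hb2 as [Hb [_ Hneg]].
    exact (psi1_tends_to_zero r kappa c mu sigma psi psi1 psi2
             hr hc hkappa hsigpos hincr hC2 hode hnonneg hmono h0 h1 b2 Hb Hneg hsig).
Qed.
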